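(* Let $X$ be a real Hilbert space, $A,B\colon X\rightrightarrows X$ maximally monotone, $D:=\operatorname{dom}A-\operatorname{dom}B$, $R:=\operatorname{ran}A+\operatorname{ran}B$, $v_D:=P_{\overline D}(0)$, $v_R:=P_{\overline R}(0)$. Then: (i) $v_D\in(-\operatorname{rec}\overline{\operatorname{dom}}A)^\ominus\cap(\operatorname{rec}\overline{\operatorname{dom}}B)^\ominus=(-(\operatorname{rec}\overline{\operatorname{dom}}A)^\ominus)\cap(\operatorname{rec}\overline{\operatorname{dom}}B)^\ominus$; (ii) $v_D\in(-\operatorname{rec}\overline{\operatorname{ran}}A)\cap\operatorname{rec}\overline{\operatorname{ran}}B$; (iii) $v_R\in(-\operatorname{rec}\overline{\operatorname{ran}}A)^\ominus\cap(-\operatorname{rec}\overline{\operatorname{ran}}B)^\ominus=-\big((\operatorname{rec}\overline{\operatorname{ran}}A)^\ominus\cap(\operatorname{rec}\overline{\operatorname{ran}}B)^\ominus\big)$; (iv) $v_R\in(-\operatorname{rec}\overline{\operatorname{dom}}A)\cap(-\operatorname{rec}\overline{\operatorname{dom}}B)=-(\operatorname{rec}\overline{\operatorname{dom}}A\cap\operatorname{rec}\overline{\operatorname{dom}}B)$; (v) $\langle v_D,v_R\rangle=0$; (vi) $v_D+v_R\in\overline D\cap\overline R$. Moreover, let $T:=\operatorname{Id}-J_A+J_BR_A$, $v:=P_{\overline{\operatorname{ran}}(\operatorname{Id}-T)}(0)$, and assume $\overline{\operatorname{ran}}(\operatorname{Id}-T)=\overline{D\cap R}=\overline D\cap\overline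 R$. Then (vii) $v=v_D+v_R$ and (viii) $\|v\|^2=\|v_D\|^2+\|v_R\|^2=\|(v_R,v_D)\|^2$.
   Context: $J_C:=(\operatorname{Id}+C)^{-1}$, $R_C:=2J_C-\operatorname{Id}$. $P_S$ is the projection onto a nonempty closed convex set $S$ (the sets $\overline D,\overline R$ are closed convex). $\overline{\operatorname{dom}}A$, $\overline{\operatorname{ran}}A$ are the closures of domain and range (closed convex sets). $\operatorname{rec}C:=\{d: C+d\subseteq C\}$ is the recession cone of a convex set $C$; for a set $S$, $S^\ominus:=\{u\in X:\langle u,s\rangle\le0\ \forall s\in S\}$ is the polar cone. $\|(v_R,v_D)\|$ is the norm in $X\times X$. *)

From HB Require Import structures.
From mathcomp Require Import all_boot all_order all_algebra.
From mathcomp Require Import all_classical all_reals all_analysis.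
Set Implicit Arguments. Unset Strict Implicit. Unset Printing Implicit Defensive.
Import Order.TTheory GRing.Theory Num.Theory.
Import numFieldNormedType.Exports.
Local Open Scope classical_set_scope.
Local Open Scope ring_scope.

Section Defs.
Variables (R : realType) (X : normedModType R).

(* ip is an inner product inducing the norm of X: symmetric, linear in the
   first argument, and <x,x> = |x|^2. With X complete this makes X a real
   Hilbert space. *)
Definition is_inner_product (ip : X -> X -> R) : Prop :=
  [/\ (forall x y, ip x y = ip y x),
      (forall a x y z, ip (a *: x + y) z = a * ip x z + ip y z)
    & (forall x, ip x x = `|x| ^+ 2)].

Definition op_graph (A : X -> set X) : set (X * X) := [set p | A p.1 p.2].
Definition op_dom (A : X -> set X) : set X := [set x | exists u, A x u].
Definition op_ran (A : X -> set X) : set X := [set u | exists x, A x u].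

Definition monotone_op (ip : X -> X -> R) (A : X -> set X) : Prop :=
  forall x y u v, A x u -> A y v -> 0 <= ip (x - y) (u - v).

Definition maximally_monotone (ip : X -> X -> R) (A : X -> set X) : Prop :=
  monotone_op ip A /\
  forall B : X -> set X, monotone_op ip B -> op_graph A `<=` op_graph B ->
    op_graph B = op_graph A.

(* resolvent J_A = (Id + A)^{-1}: J_A x is a p with x ∈ p + A p
   (single-valued and everywhere defined for maximally monotone A). *)
Definition resolvent (A : X -> set X) (x : X) : X :=
  xget x [set p | A p (x - p)].
Definition reflected (A : X -> set X) (x : X) : X :=
  2%:R *: resolvent A x - x.

(* projection P_S x: a nearest point of S to x (unique for S nonempty
   closed convex) *)
Definition proj_on (S : set X) (x : X) : X :=
  xget x [set p | S p /\ forall s, S s -> `|x - p| <= `|x - s|].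

Definition mink_sum (S T : set X) : set X :=
  [set z | exists a b, S a /\ T b /\ z = a + b].
Definition mink_diff (S T : set X) : set X :=
  [set z | exists a b, S a /\ T b /\ z = a - b].
Definition setneg (S : set X) : set X := [set z | S (- z)].

Definition rec_cone (C : set X) : set X := [set d | forall c, C c -> C (c + d)].
Definition polar_cone (ip : X -> X -> R) (S : set X) : set X :=
  [set u | forall s, S s -> ip u s <= 0].

Definition pair_norm2 (ip : X -> X -> R) (p : X * X) : R :=
  ip p.1 p.1 + ip p.2 p.2.

End Defs.

(* v_D and v_R are the minimal-norm points of the closed convex sets cl D and
   cl R (closures of domains and ranges of maximally monotone operators are
   convex), so they are characterised by <v, s - v> >= 0 on their sets.  In
   particular <v_D, d> >= 0 for every recession direction d of cl D, and the
   vectors of rec cl dom A and of -rec cl dom B are such directions: this is (i),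
   and (iii) is symmetric.  Conversely, if <w, .> is bounded above on ran A then
   w recedes in cl dom A, because the resolvent points J_{lA}(x + w) come within
   O(sqrt l) of x + w; applied to A^-1, B^-1, A and B this gives (ii) and (iv).
   Then (ii) and (iii) give (v); (ii) and (iv) say that v_R recedes in cl D and
   v_D in cl R, whence (vi); and by (v) the point v_D + v_R satisfies the
   variational inequality on cl D /\ cl R, whence (vii).  Resolvents exist by
   Minty's theorem, proved here with the Fitzpatrick function as in
   Simons-Zalinescu. *)

From HB Require Import structures.
From mathcomp Require Import all_boot all_order all_algebra.
From mathcomp Require Import all_classical all_reals all_analysis.
From mathcomp Require Import ring lra.
Set Implicit Arguments. Unset Strict Implicit. Unset Printing Implicit Defensive.
Import Order.TTheory GRing.Theory Num.Theory.
Import numFieldNormedType.Exports.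
Local Open Scope classical_set_scope.
Local Open Scope ring_scope.

Section RealInequalities.
Variable R : realFieldType.

Lemma ge0_of_affine_ge0 (a b : R) :
  (forall t, 0 < t -> t <= 1 -> 0 <= a + t * b) -> 0 <= a.
Proof.
move=> H; rewrite leNgt; apply/negP => a_lt0.
have b_ge0 : 0 <= b by have := H 1 ltr01 (lexx _); lra.
have d_gt0 : 0 < 2 * (b + 1) by lra.
pose t := Num.min 1 (- a / (2 * (b + 1))).
have t_gt0 : 0 < t by rewrite lt_min ltr01 divr_gt0 // oppr_gt0.
have t_le1 : t <= 1 by rewrite ge_min lexx.
have tb : t * (2 * (b + 1)) <= - a by rewrite -ler_pdivlMr // ge_min lexx orbT.
have := H t t_gt0 t_le1; nra.
Qed.

Lemma quadratic_bound_small (K1 K2 e : R) : 0 <= K1 -> 0 <= K2 -> 0 < e ->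
  exists2 l, 0 < l & forall t, 0 <= t -> t ^+ 2 <= l * (K1 * t + K2) -> t < e.
Proof.
move=> K1_ge0 K2_ge0 e_gt0.
have a1 : 0 < e / (2 * (K1 + 1)) by apply: divr_gt0; lra.
have a2 : 0 < e ^+ 2 / (4 * (K2 + 1)) by apply: divr_gt0; [exact: exprn_gt0|lra].
pose l := Num.min (e / (2 * (K1 + 1))) (e ^+ 2 / (4 * (K2 + 1))).
have l_gt0 : 0 < l by rewrite lt_min a1 a2.
have l1 : l * (2 * (K1 + 1)) <= e by rewrite -ler_pdivlMr ?ge_min ?lexx //; lra.
have l2 : l * (4 * (K2 + 1)) <= e ^+ 2.
  by rewrite -ler_pdivlMr ?ge_min ?lexx ?orbT //; lra.
exists l => // t t_ge0 ht; rewrite ltNge; apply/negP => et.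
have b1 : l * K1 * t <= e / 2 * t by apply: ler_wpM2r => //; nra.
have b2 : l * K2 < e ^+ 2 / 2 by nra.
nra.
Qed.

End RealInequalities.

Lemma cvg_le_harmonic (R : realType) (f : R^nat) (l c : R) :
  f @ \oo --> l -> (forall n, f n <= c + harmonic n) -> l <= c.
Proof.
move=> fl f_le; rewrite -[c]addr0.
apply: (ler_cvg_to fl (cvgD (cvg_cst c) cvg_harmonic)).
exact: nearW.
Qed.

Section Closure.
Variables (R : realType) (X : normedModType R).
Implicit Types (S T : set X) (a b w x z : X).

Definition is_convex S := forall a b (t : R), S a -> S b -> 0 <= t -> t <= 1 ->
  S (t *: a + (1 - t) *: b).

Lemma closure_normP S x :
  closure S x <-> forall e, 0 < e -> exists2 s, S s & `|x - s| < e.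
Proof.
split.
  move=> Sx e e_gt0; have [s [Ss]] := Sx _ (nbhsx_ballx x e e_gt0).
  by rewrite -ball_normE; exists s.
move=> H B /nbhs_ballP[e e_gt0 eB]; have [s Ss xs] := H e e_gt0.
by exists s; split => //; apply: eB; rewrite -ball_normE.
Qed.

Lemma closure_approx S z :
  (forall e, 0 < e -> exists2 s, closure S s & `|z - s| < e) -> closure S z.
Proof.
move=> H; rewrite ((closure_id (closure S)).1 (@closed_closure _ _)).
exact/closure_normP.
Qed.

Lemma rec_cone_closure S w :
  (forall s, S s -> closure S (s + w)) -> rec_cone (closure S) w.
Proof.
move=> Sw z /closure_normP Sz; apply: closure_approx => e e_gt0.
have [s Ss zs] := Sz _ e_gt0; exists (s + w); first exact: Sw.
by rewrite opprD addrACA subrr addr0.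
Qed.

Lemma closure_mink_diff S T a b :
  closure S a -> closure T b -> closure (mink_diff S T) (a - b).
Proof.
move=> /closure_normP Sa /closure_normP Tb; apply/closure_normP => e e_gt0.
have e2 : 0 < e / 2 by apply: divr_gt0.
have [a' Sa' aa'] := Sa _ e2; have [b' Tb' bb'] := Tb _ e2.
exists (a' - b'); first by exists a', b'.
have -> : a - b - (a' - b') = (a - a') - (b - b').
  by rewrite !opprB addrACA [RHS]addrACA (addrC (- b)).
by have := ler_normB (a - a') (b - b'); lra.
Qed.

Lemma closure_mink_sum S T a b :
  closure S a -> closure T b -> closure (mink_sum S T) (a + b).
Proof.
move=> /closure_normP Sa /closure_normP Tb; apply/closure_normP => e e_gt0.
have e2 : 0 < e / 2 by apply: divr_gt0.
have [a' Sa' aa'] := Sa _ e2; have [b' Tb' bb'] := Tb _ e2.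
exists (a' + b'); first by exists a', b'.
by rewrite opprD addrACA; have := ler_normD (a - a') (b - b'); lra.
Qed.

Lemma is_convex_closure S :
  (forall a b (t : R), S a -> S b -> 0 <= t -> t <= 1 ->
     closure S (t *: a + (1 - t) *: b)) ->
  is_convex (closure S).
Proof.
move=> H a b t /closure_normP Sa /closure_normP Sb t0 t1.
apply: closure_approx => e e_gt0.
have e2 : 0 < e / 2 by apply: divr_gt0.
have [a' Sa' aa'] := Sa _ e2; have [b' Sb' bb'] := Sb _ e2.
exists (t *: a' + (1 - t) *: b'); first exact: H.
rewrite opprD addrACA -!scalerBr.
apply: (le_lt_trans (ler_normD _ _)); rewrite !normrZ !ger0_norm ?subr_ge0 //.
have : t * `|a - a'| <= t * (e / 2) by rewrite ler_wpM2l // ltW.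
have : (1 - t) * `|b - b'| <= (1 - t) * (e / 2) by rewrite ler_wpM2l ?subr_ge0 // ltW.
lra.
Qed.

Lemma is_convexI S T : is_convex S -> is_convex T -> is_convex (S `&` T).
Proof. by move=> cS cT a b t [Sa Ta] [Sb Tb] t0 t1; split; [apply: cS | apply: cT]. Qed.

Lemma rec_cone_closure_diffl S T :
  rec_cone (closure S) `<=` rec_cone (closure (mink_diff S T)).
Proof.
move=> w Sw; apply: rec_cone_closure => _ [a [b [Sa [Tb ->]]]].
by rewrite addrAC; apply: closure_mink_diff; [apply: Sw | ]; apply: subset_closure.
Qed.

Lemma rec_cone_closure_diffr S T :
  setneg (rec_cone (closure T)) `<=` rec_cone (closure (mink_diff S T)).
Proof.
move=> w Tw; apply: rec_cone_closure => _ [a [b [Sa [Tb ->]]]].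
rewrite -addrA (addrC (- b)) -opprB.
by apply: closure_mink_diff; [ | apply: Tw]; apply: subset_closure.
Qed.

Lemma rec_cone_closure_suml S T :
  rec_cone (closure S) `<=` rec_cone (closure (mink_sum S T)).
Proof.
move=> w Sw; apply: rec_cone_closure => _ [a [b [Sa [Tb ->]]]].
by rewrite addrAC; apply: closure_mink_sum; [apply: Sw | ]; apply: subset_closure.
Qed.

Lemma rec_cone_closure_sumr S T :
  rec_cone (closure T) `<=` rec_cone (closure (mink_sum S T)).
Proof.
move=> w Tw; apply: rec_cone_closure => _ [a [b [Sa [Tb ->]]]].
by rewrite -addrA; apply: closure_mink_sum; [ | apply: Tw]; apply: subset_closure.
Qed.

Lemma setnegI S T : setneg S `&` setneg T = setneg (S `&` T).
Proof. by apply/seteqP; split => u. Qed.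

End Closure.

Section InnerProduct.
Variables (R : realType) (X : normedModType R) (ip : X -> X -> R).
Hypothesis Hip : is_inner_product ip.
Implicit Types (S : set X) (A : X -> set X).

Lemma ipC x y : ip x y = ip y x.
Proof. by case: Hip. Qed.

Lemma ipxx x : ip x x = `|x| ^+ 2.
Proof. by case: Hip. Qed.

Lemma ipDl x y z : ip (x + y) z = ip x z + ip y z.
Proof. by case: Hip => _ H _; have := H 1 x y z; rewrite scale1r mul1r. Qed.

Lemma ip0l z : ip 0 z = 0.
Proof. by have := ipDl 0 0 z; rewrite addr0; lra. Qed.

Lemma ipZl a x z : ip (a *: x) z = a * ip x z.
Proof. by case: Hip => _ H _; have := H a x 0 z; rewrite !addr0 ip0l addr0. Qed.

Lemma ipNl x z : ip (- x) z = - ip x z.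
Proof. by rewrite -scaleN1r ipZl mulN1r. Qed.

Lemma ipDr x y z : ip z (x + y) = ip z x + ip z y.
Proof. by rewrite ipC ipDl ![ip _ z]ipC. Qed.

Lemma ipZr a x z : ip z (a *: x) = a * ip z x.
Proof. by rewrite ipC ipZl ipC. Qed.

Lemma ipNr x z : ip z (- x) = - ip z x.
Proof. by rewrite ipC ipNl ipC. Qed.

Lemma ip0r z : ip z 0 = 0.
Proof. by rewrite ipC ip0l. Qed.

Definition ipE := (ipDl, ipDr, ipZl, ipZr, ipNl, ipNr, ip0l, ip0r).

Lemma ipxxBZ a b (t : R) :
  ip (a - t *: b) (a - t *: b) = ip a a - 2 * t * ip a b + t ^+ 2 * ip b b.
Proof. by rewrite !ipE (ipC b a); ring. Qed.

Lemma ip_le_mul_norm x y : ip x y <= `|x| * `|y|.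
Proof.
have : 0 <= ip (`|y| *: x - `|x| *: y) (`|y| *: x - `|x| *: y) by rewrite ipxx.
rewrite !ipE !ipxx (ipC y x); set P := `|x| * `|y|.
have P_ge0 : 0 <= P by rewrite mulr_ge0.
move=> H; have PP : P * ip x y <= P * P by move: H; rewrite /P; nra.
have [P_gt0|] := ltrP 0 P; first by rewrite -(ler_pM2l P_gt0).
move=> P_le0; have /eqP : P = 0 by apply/le_anti; rewrite P_le0 P_ge0.
by rewrite mulf_eq0 !normr_eq0 => /orP[] /eqP ->; rewrite ?ip0l ?ip0r.
Qed.

Lemma cauchy_schwarz x y : `|ip x y| <= `|x| * `|y|.
Proof.
rewrite ler_norml ip_le_mul_norm andbT.
by have := ip_le_mul_norm (- x) y; rewrite ipNl normrN; lra.
Qed.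

Lemma cvg_ipl (u : X^nat) l v :
  u @ \oo --> l -> (fun n => ip (u n) v) @ \oo --> ip l v.
Proof.
move=> /cvgrPdist_lt ul; apply/cvgrPdist_lt => e e_gt0.
have e' : 0 < e / (`|v| + 1) by rewrite divr_gt0 // ltr_wpDl.
apply: filterS (ul _ e') => n; rewrite ltr_pdivlMr ?ltr_wpDl // => lun.
rewrite -ipNl -ipDl; apply: le_lt_trans (cauchy_schwarz _ _) _.
have : `|l - u n| * `|v| <= `|l - u n| * (`|v| + 1) by rewrite ler_wpM2l ?lerDl.
lra.
Qed.

Lemma cvg_ipr (u : X^nat) l v :
  u @ \oo --> l -> (fun n => ip v (u n)) @ \oo --> ip v l.
Proof. by move=> ul; rewrite ipC; under eq_fun do rewrite ipC; exact: cvg_ipl. Qed.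

Lemma polar_cone_setneg S : polar_cone ip (setneg S) = setneg (polar_cone ip S).
Proof.
apply/seteqP; split => u /= Su s Ss.
  by rewrite ipNl -ipNr; apply: Su; rewrite /setneg /= opprK.
by rewrite -[u]opprK ipNl -ipNr; apply: Su.
Qed.

Definition op_inv A : X -> set X := fun u x => A x u.

Lemma maximally_monotone_related A p q : maximally_monotone ip A ->
  (forall y v, A y v -> 0 <= ip (p - y) (q - v)) -> A p q.
Proof.
move=> [monoA maxA] pq.
pose B y v := A y v \/ (y = p /\ v = q).
have monoB : monotone_op ip B.
  move=> x y u v [Axu|[-> ->]] [Ayv|[-> ->]].
  - exact: monoA.
  - by have := pq _ _ Axu; rewrite !ipE; lra.
  - exact: pq.
  - by rewrite !subrr ip0l.
have : op_graph B (p, q) by right.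
by rewrite (maxA B monoB) // => -[y v] /= Ayv; left.
Qed.

Lemma graph_nonempty A : maximally_monotone ip A -> exists y v, A y v.
Proof.
move=> maxA; apply: contrapT => empty; apply: (empty); exists 0, 0.
by apply: maximally_monotone_related => // y v Ayv; case: empty; exists y, v.
Qed.

Lemma maximally_monotone_shift_scale A c (k : R) : 0 < k ->
  maximally_monotone ip A -> maximally_monotone ip (fun x u => A (x + c) (k *: u)).
Proof.
move=> k_gt0 maxA; have [monoA _] := maxA.
have ipE' x y u v : ip (x + c - (y + c)) (k *: u - k *: v) = k * ip (x - y) (u - v).
  by rewrite !ipE; ring.
split=> [x y u v Axu Ayv|B monoB AB].
  by rewrite -(pmulr_rge0 _ k_gt0) -ipE'; exact: monoA.
apply/seteqP; split=> [[x u] /= Bxu|[x u]]; last exact: AB.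
apply: maximally_monotone_related => // y v Ayv.
have : B (y - c) (k^-1 *: v).
  by apply: (AB (_, _)); rewrite /op_graph /= subrK scalerA divff ?gt_eqF ?scale1r.
move=> /(monoB _ _ _ _ Bxu).
have -> : ip (x + c - y) (k *: u - v) = k * ip (x - (y - c)) (u - k^-1 *: v).
  by rewrite !ipE; field; rewrite gt_eqF.
by rewrite pmulr_rge0.
Qed.

Lemma maximally_monotone_inv A :
  maximally_monotone ip A -> maximally_monotone ip (op_inv A).
Proof.
move=> [monoA maxA]; split=> [x y u v Axu Ayv|B monoB AB].
  by rewrite ipC; exact: monoA.
apply/seteqP; split=> [[x u] /= Bxu|[x u]]; last exact: AB.
rewrite /op_graph /op_inv /=; apply: maximally_monotone_related; first by split.
by move=> y v Ayv; rewrite ipC; apply: monoB => //; apply: (AB (_, _)).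
Qed.

End InnerProduct.

Section HilbertSpace.
Variables (R : realType) (X : completeNormedModType R) (ip : X -> X -> R).
Hypothesis Hip : is_inner_product ip.
Implicit Types (S : set X) (A : X -> set X).

Lemma cvg_harmonic_cauchy (u : X^nat) (C : R) : 0 <= C ->
  (forall n k, `|u n - u k| ^+ 2 <= C * (harmonic n + harmonic k)) ->
  cvg (u @ \oo).
Proof.
move=> C_ge0 uC; apply: cauchy_cvg; apply: cauchy_exP => e e_gt0.
have d_gt0 : 0 < e ^+ 2 / (2 * C + 1) by rewrite divr_gt0 ?exprn_gt0 //; lra.
have [N _ hN] := cvgr_lt 0 cvg_harmonic _ d_gt0.
exists (u N); exists N => // n /= Nn; rewrite -ball_normE /=.
have hNd := hN N (leqnn N); have hnd := hN n Nn; have := uC N n.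
have dE : e ^+ 2 / (2 * C + 1) * (2 * C + 1) = e ^+ 2.
  by rewrite divfK // gt_eqF //; lra.
have := harmonic_ge0 N; have := harmonic_ge0 n; have := normr_ge0 (u N - u n).
nra.
Qed.

Lemma cvg_norm2 (u : X^nat) l :
  u @ \oo --> l -> (fun n => `|u n| ^+ 2) @ \oo --> `|l| ^+ 2.
Proof.
by move=> ul; rewrite expr2; under eq_fun do rewrite expr2; apply: cvgM; apply: cvg_norm.
Qed.

Lemma dist_nearly_nearest S x (m ea eb : R) a b : is_convex S ->
  (forall s, S s -> m <= `|x - s| ^+ 2) -> S a -> S b ->
  `|x - a| ^+ 2 <= m + ea -> `|x - b| ^+ 2 <= m + eb ->
  `|a - b| ^+ 2 <= 2 * (ea + eb).
Proof.
move=> convS m_le Sa Sb xa xb.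
have half_ge0 : (0 : R) <= 2^-1 by rewrite invr_ge0.
have half_le1 : (2 : R)^-1 <= 1 by rewrite invf_le1 // ler1n.
have := m_le _ (convS a b _ Sa Sb half_ge0 half_le1).
move: xa xb; rewrite -!(ipxx Hip) !(ipE Hip) (ipC Hip a x) (ipC Hip b x) (ipC Hip b a).
lra.
Qed.

Lemma exists_nearest S x s0 : closed S -> is_convex S -> S s0 ->
  exists p, S p /\ forall s, S s -> `|x - p| <= `|x - s|.
Proof.
move=> clS convS Ss0.
pose E := [set `|x - s| ^+ 2 | s in S].
have infE : has_inf E.
  by split; [exists (`|x - s0| ^+ 2), s0 | exists 0 => _ [s _ <-]].
have m_le s : S s -> inf E <= `|x - s| ^+ 2.
  by move=> Ss; apply: (ge_inf (proj2 infE)); exists s.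
have /choice[s sP] n : exists s, S s /\ `|x - s| ^+ 2 <= inf E + harmonic n.
  have [_ [s Ss <-] /ltW] := inf_adherent (harmonic_gt0 n) infE.
  by exists s.
have cvg_s : cvg (s @ \oo).
  apply: (cvg_harmonic_cauchy (C := 2)) => // n k.
  exact: dist_nearly_nearest convS m_le (sP n).1 (sP k).1 (sP n).2 (sP k).2.
exists (lim (s @ \oo)); split.
  by apply: (closed_cvg _ clS _ _ cvg_s); apply: nearW => n; exact: (sP n).1.
move=> s' Ss'; rewrite -ler_sqr ?nnegrE //; apply: le_trans (m_le _ Ss').
apply: (cvg_le_harmonic _ (fun n => (sP n).2)).
by apply: cvg_norm2; apply: cvgB => //; exact: cvg_cst.
Qed.

Lemma proj_onP S x s0 : closed S -> is_convex S -> S s0 ->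
  S (proj_on S x) /\
  forall s, S s -> ip (x - proj_on S x) (s - proj_on S x) <= 0.
Proof.
move=> clS convS Ss0.
have [Sp p_min] : S (proj_on S x) /\
    forall s, S s -> `|x - proj_on S x| <= `|x - s|.
  exact: (xgetPex x (exists_nearest x clS convS Ss0)).
set p := proj_on S x in Sp p_min *; split => // s Ss.
suff : 0 <= - 2 * ip (x - p) (s - p) by lra.
apply: (ge0_of_affine_ge0 (b := ip (s - p) (s - p))) => t t_gt0 t_le1.
have := p_min _ (convS s p t Ss Sp (ltW t_gt0) t_le1).
have -> : x - (t *: s + (1 - t) *: p) = x - p - t *: (s - p).
  by rewrite scalerBl scale1r scalerBr !opprD !opprK !addrA [x - _ - p]addrAC.
rewrite -ler_sqr ?nnegrE // -!(ipxx Hip) (ipxxBZ Hip).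
rewrite -(pmulr_rge0 _ t_gt0); nra.
Qed.

Lemma proj_onE S x p : closed S -> is_convex S -> S p ->
  (forall s, S s -> ip (x - p) (s - p) <= 0) -> proj_on S x = p.
Proof.
move=> clS convS Sp p_var; have [Sq q_var] := proj_onP x clS convS Sp.
set q := proj_on S x in Sq q_var *.
have : `|q - p| ^+ 2 <= 0.
  have := p_var _ Sq; have := q_var _ Sp; rewrite -(ipxx Hip) !(ipE Hip).
  by rewrite (ipC Hip q p); lra.
by rewrite le_eqVlt ltNge sqr_ge0 orbF sqrf_eq0 normr_eq0 subr_eq0 => /eqP.
Qed.

Lemma proj0P S s0 : closed S -> is_convex S -> S s0 ->
  S (proj_on S 0) /\
  forall s, S s -> ip (proj_on S 0) (proj_on S 0) <= ip (proj_on S 0) s.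
Proof.
move=> clS convS Ss0; have [Sp p_var] := proj_onP 0 clS convS Ss0.
by split=> // s /p_var; rewrite sub0r !(ipE Hip); lra.
Qed.

Section Minty.
Variable A : X -> set X.
Hypothesis maxA : maximally_monotone ip A.

(* [fitz_le x u c] says that F(x, u) <= c, where F is the Fitzpatrick function
   F(x, u) = sup {<x, v> + <y, u> - <y, v> | (y, v) in gra A}. *)
Definition fitz_le x u (c : R) :=
  forall y v, A y v -> ip x v + ip y u - ip y v <= c.

Let penalty (x u : X) : R := (`|x| ^+ 2 + `|u| ^+ 2) / 2.

Lemma fitz_le_ip x u c : fitz_le x u c -> ip x u <= c.
Proof.
move=> Fc; rewrite leNgt; apply/negP => c_lt.
have Axu : A x u.
  apply: (maximally_monotone_related Hip) => // y v Ayv.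
  by have := Fc _ _ Ayv; rewrite !(ipE Hip); lra.
by have := Fc _ _ Axu; lra.
Qed.

Lemma fitz_le_graph y v : A y v -> fitz_le y v (ip y v).
Proof.
move=> Ayv y' v' Ayv'; have := maxA.1 _ _ _ _ Ayv Ayv'.
by rewrite !(ipE Hip); lra.
Qed.

Lemma fitz_le_convex x1 u1 c1 x2 u2 c2 (t : R) : 0 <= t -> t <= 1 ->
  fitz_le x1 u1 c1 -> fitz_le x2 u2 c2 ->
  fitz_le (t *: x1 + (1 - t) *: x2) (t *: u1 + (1 - t) *: u2)
    (t * c1 + (1 - t) * c2).
Proof.
move=> t_ge0 t_le1 F1 F2 y v Ayv; have := F1 _ _ Ayv; have := F2 _ _ Ayv.
rewrite !(ipE Hip); nra.
Qed.

Lemma fitz_le_lim (xs us : X^nat) (cs : R^nat) x u c :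
  xs @ \oo --> x -> us @ \oo --> u -> cs @ \oo --> c ->
  (forall n, fitz_le (xs n) (us n) (cs n)) -> fitz_le x u c.
Proof.
move=> xs_x us_u cs_c F y v Ayv.
have ell_cvg : (fun n => ip (xs n) v + ip y (us n) - ip y v) @ \oo -->
    ip x v + ip y u - ip y v.
  by apply: cvgB; [apply: cvgD; [apply: cvg_ipl | apply: cvg_ipr] | exact: cvg_cst].
by apply: (ler_cvg_to ell_cvg cs_c); apply: nearW => n; apply: F.
Qed.

Lemma fitz_le_penalty_ge0 x u c : fitz_le x u c -> 0 <= c + penalty x u.
Proof.
move=> /fitz_le_ip xu; have : 0 <= ip (x + u) (x + u) by rewrite (ipxx Hip).
by rewrite /penalty -!(ipxx Hip) !(ipE Hip) (ipC Hip u x); lra.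
Qed.

Lemma fitz_penalized_min : exists m x u, fitz_le x u (m - penalty x u) /\
  forall x' u' c, fitz_le x' u' c -> m <= c + penalty x' u'.
Proof.
pose Phi := [set d | exists x u c, fitz_le x u c /\ d = c + penalty x u].
have [y0 [v0 Ay0v0]] := graph_nonempty Hip maxA.
have infPhi : has_inf Phi.
  split; last by exists 0 => _ [x [u [c [Fc ->]]]]; exact: fitz_le_penalty_ge0.
  exists (ip y0 v0 + penalty y0 v0), y0, v0, (ip y0 v0).
  by split => //; exact: fitz_le_graph.
have m_le x u c : fitz_le x u c -> inf Phi <= c + penalty x u.
  by move=> Fc; apply: (ge_inf (proj2 infPhi)); exists x, u, c.
have /choice[z zP] n :
    exists z : X * X, fitz_le z.1 z.2 (inf Phi + harmonic n - penalty z.1 z.2).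
  have [_ [x [u [c [Fc ->]]]] /ltW lt] := inf_adherent (harmonic_gt0 n) infPhi.
  exists (x, u) => y v Ayv; rewrite [(x, u).1]/= [(x, u).2]/=.
  by have := Fc _ _ Ayv; lra.
pose xs n := (z n).1; pose us n := (z n).2.
have cauchy n k :
    `|xs n - xs k| ^+ 2 + `|us n - us k| ^+ 2 <= 4 * (harmonic n + harmonic k).
  have half_ge0 : (0 : R) <= 2^-1 by rewrite invr_ge0.
  have half_le1 : (2 : R)^-1 <= 1 by rewrite invf_le1 // ler1n.
  have := m_le _ _ _ (fitz_le_convex half_ge0 half_le1 (zP n) (zP k)).
  rewrite /penalty -!(ipxx Hip) !(ipE Hip) /xs /us.
  by rewrite (ipC Hip (z k).1) (ipC Hip (z k).2); lra.
have cvg_xs : cvg (xs @ \oo).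
  apply: (cvg_harmonic_cauchy (C := 4)) => // n k.
  by have := cauchy n k; have := sqr_ge0 `|us n - us k|; lra.
have cvg_us : cvg (us @ \oo).
  apply: (cvg_harmonic_cauchy (C := 4)) => // n k.
  by have := cauchy n k; have := sqr_ge0 `|xs n - xs k|; lra.
exists (inf Phi), (lim (xs @ \oo)), (lim (us @ \oo)); split => //.
apply: (fitz_le_lim cvg_xs cvg_us _ zP).
apply: cvgB.
  by rewrite -[Y in _ --> Y]addr0; apply: cvgD; [exact: cvg_cst | exact: cvg_harmonic].
by apply: cvgMr_tmp; apply: cvgD; apply: cvg_norm2.
Qed.

Lemma minty_variational m xb ub y v :
  fitz_le xb ub (m - penalty xb ub) ->
  (forall x u c, fitz_le x u c -> m <= c + penalty x u) -> A y v ->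
  ip (xb + ub) (xb + ub) <= ip (- ub - y) (- xb - v).
Proof.
move=> Fb m_le Ayv.
have a_ge0 : 0 <= ip y v + penalty y v - m - penalty (y - xb) (v - ub).
  apply: (ge0_of_affine_ge0 (b := penalty (y - xb) (v - ub))) => t t_gt0 t_le1.
  have := m_le _ _ _ (fitz_le_convex (ltW t_gt0) t_le1 (fitz_le_graph Ayv) Fb).
  rewrite -(pmulr_rge0 _ t_gt0) /penalty -!(ipxx Hip) !(ipE Hip).
  by rewrite (ipC Hip xb y) (ipC Hip ub v); nra.
move: a_ge0 (fitz_le_ip Fb); rewrite /penalty -!(ipxx Hip) !(ipE Hip).
by rewrite (ipC Hip xb y) (ipC Hip v ub) (ipC Hip ub xb); lra.
Qed.

Theorem minty : exists p, A p (- p).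
Proof.
have [m [xb [ub [Fb m_le]]]] := fitz_penalized_min.
have var := minty_variational Fb m_le.
have xbub_ge0 : 0 <= ip (xb + ub) (xb + ub) by rewrite (ipxx Hip).
have A_ub_xb : A (- ub) (- xb).
  by apply: (maximally_monotone_related Hip) => // y v /var; lra.
have := var _ _ A_ub_xb; rewrite !subrr (ip0l Hip) (ipxx Hip).
rewrite le_eqVlt ltNge sqr_ge0 orbF sqrf_eq0 normr_eq0 addr_eq0 => /eqP xbE.
by exists xb; rewrite {1}xbE.
Qed.

End Minty.

Lemma minty_decomp A (l : R) x : maximally_monotone ip A -> 0 < l ->
  exists p u, A p u /\ x = p + l *: u.
Proof.
move=> maxA l_gt0; have il_gt0 : 0 < l^-1 by rewrite invr_gt0.
have [q Aq] := minty (maximally_monotone_shift_scale Hip x il_gt0 maxA).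
exists (q + x), (l^-1 *: - q); split => //.
by rewrite scalerA divff ?gt_eqF // scale1r addrAC subrr add0r.
Qed.

Lemma closure_dom_of_resolvent_bound A z (K1 K2 : R) : maximally_monotone ip A ->
  0 <= K1 -> 0 <= K2 ->
  (forall l p u, 0 < l -> A p u -> z = p + l *: u ->
     l * `|u| ^+ 2 <= K1 * (l * `|u|) + K2) ->
  closure (op_dom A) z.
Proof.
move=> maxA K1_ge0 K2_ge0 bound; apply/closure_normP => e e_gt0.
have [l l_gt0 small] := quadratic_bound_small K1_ge0 K2_ge0 e_gt0.
have [p [u [Apu zE]]] := minty_decomp z maxA l_gt0.
exists p; first by exists u.
have -> : `|z - p| = l * `|u| by rewrite zE addrAC subrr add0r normrZ gtr0_norm.
apply: small; first by rewrite mulr_ge0 // ltW.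
have -> : (l * `|u|) ^+ 2 = l * (l * `|u| ^+ 2) by ring.
by apply: ler_wpM2l; [exact: ltW | exact: (bound _ _ _ l_gt0 Apu zE)].
Qed.

Lemma closure_dom_segment A a b (t : R) : maximally_monotone ip A ->
  op_dom A a -> op_dom A b -> 0 <= t -> t <= 1 ->
  closure (op_dom A) (t *: a + (1 - t) *: b).
Proof.
move=> maxA [va Aava] [vb Abvb] t_ge0 t_le1; set z := t *: a + (1 - t) *: b.
apply: (closure_dom_of_resolvent_bound
  (K1 := `|va| + `|vb|) (K2 := `|z - a| * `|va| + `|z - b| * `|vb|)) => //.
move=> l p u l_gt0 Apu zE; have pE : p = z - l *: u by rewrite zE addrK.
have zp : `|z - p| = l * `|u| by rewrite zE addrAC subrr add0r normrZ gtr0_norm.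
have mono_a : ip (p - a) va <= ip (p - a) u.
  by have := maxA.1 _ _ _ _ Apu Aava; rewrite !(ipE Hip); lra.
have mono_b : ip (p - b) vb <= ip (p - b) u.
  by have := maxA.1 _ _ _ _ Apu Abvb; rewrite !(ipE Hip); lra.
have comb : t * ip (p - a) u + (1 - t) * ip (p - b) u = - (l * `|u| ^+ 2).
  by rewrite -(ipxx Hip) pE /z !(ipE Hip); ring.
have /andP[cs_a _] : - (`|p - a| * `|va|) <= ip (p - a) va <= `|p - a| * `|va|.
  by rewrite -ler_norml; exact: cauchy_schwarz.
have /andP[cs_b _] : - (`|p - b| * `|vb|) <= ip (p - b) vb <= `|p - b| * `|vb|.
  by rewrite -ler_norml; exact: cauchy_schwarz.
have dist_a : `|p - a| <= l * `|u| + `|z - a| by rewrite -zp (distrC z p) ler_distD.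
have dist_b : `|p - b| <= l * `|u| + `|z - b| by rewrite -zp (distrC z p) ler_distD.
have t1_ge0 : 0 <= 1 - t by rewrite subr_ge0.
have := ler_wpM2l t_ge0 (le_trans cs_a mono_a).
have := ler_wpM2l t1_ge0 (le_trans cs_b mono_b).
have := ler_wpM2r (normr_ge0 va) dist_a; have := ler_wpM2r (normr_ge0 vb) dist_b.
have := mulr_ge0 (normr_ge0 (p - a)) (normr_ge0 va).
have := mulr_ge0 (normr_ge0 (p - b)) (normr_ge0 vb).
nra.
Qed.

Lemma rec_cone_dom_of_ran_le A w (c : R) : maximally_monotone ip A ->
  (forall u, op_ran A u -> ip w u <= c) -> rec_cone (closure (op_dom A)) w.
Proof.
move=> maxA wc; apply: rec_cone_closure => x [y Axy].
apply: (closure_dom_of_resolvent_bound (K1 := `|y|) (K2 := `|c - ip w y|)) => //.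
move=> l p u l_gt0 Apu xwE; have pE : p = x + w - l *: u by rewrite xwE addrK.
have := maxA.1 _ _ _ _ Apu Axy; rewrite pE !(ipE Hip).
have := wc u (ex_intro _ p Apu).
have := ler_wpM2l (ltW l_gt0) (ip_le_mul_norm Hip u y).
have := ler_norm (c - ip w y); rewrite -(ipxx Hip); lra.
Qed.

Section Decomposition.
Variables A B : X -> set X.
Hypotheses (maxA : maximally_monotone ip A) (maxB : maximally_monotone ip B).
Let D := mink_diff (op_dom A) (op_dom B).
Let Rg := mink_sum (op_ran A) (op_ran B).
Let vD := proj_on (closure D) 0.
Let vR := proj_on (closure Rg) 0.

Lemma is_convex_closure_dom_diff : is_convex (closure D).
Proof.
apply: is_convex_closure => _ _ t [a1 [b1 [Aa1 [Bb1 ->]]]] [a2 [b2 [Aa2 [Bb2 ->]]]] t0 t1.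
have -> : t *: (a1 - b1) + (1 - t) *: (a2 - b2) =
          (t *: a1 + (1 - t) *: a2) - (t *: b1 + (1 - t) *: b2).
  by rewrite !scalerBr addrACA opprD.
by apply: closure_mink_diff; apply: closure_dom_segment.
Qed.

Lemma is_convex_closure_ran_sum : is_convex (closure Rg).
Proof.
apply: is_convex_closure => _ _ t [a1 [b1 [Aa1 [Bb1 ->]]]] [a2 [b2 [Aa2 [Bb2 ->]]]] t0 t1.
have -> : t *: (a1 + b1) + (1 - t) *: (a2 + b2) =
          (t *: a1 + (1 - t) *: a2) + (t *: b1 + (1 - t) *: b2).
  by rewrite !scalerDr addrACA.
apply: closure_mink_sum.
  exact: (closure_dom_segment (maximally_monotone_inv Hip maxA) Aa1 Aa2 t0 t1).
exact: (closure_dom_segment (maximally_monotone_inv Hip maxB) Bb1 Bb2 t0 t1).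
Qed.

Let vD_min : closure D vD /\ forall s, closure D s -> ip vD vD <= ip vD s.
Proof.
have [a [u Aau]] := graph_nonempty Hip maxA; have [b [v Bbv]] := graph_nonempty Hip maxB.
have Dab : closure D (a - b).
  by apply: subset_closure; exists a, b; split; [exists u | split; [exists v |]].
exact: proj0P (@closed_closure _ _) is_convex_closure_dom_diff Dab.
Qed.

Let vR_min : closure Rg vR /\ forall s, closure Rg s -> ip vR vR <= ip vR s.
Proof.
have [a [u Aau]] := graph_nonempty Hip maxA; have [b [v Bbv]] := graph_nonempty Hip maxB.
have Ruv : closure Rg (u + v).
  by apply: subset_closure; exists u, v; split; [exists a | split; [exists b |]].
exact: proj0P (@closed_closure _ _) is_convex_closure_ran_sum Ruv.
Qed.

Let vD_rec_ge0 d : rec_cone (closure D) d -> 0 <= ip vD d.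
Proof. by move=> Dd; have := vD_min.2 _ (Dd _ vD_min.1); rewrite (ipDr Hip); lra. Qed.

Let vR_rec_ge0 d : rec_cone (closure Rg) d -> 0 <= ip vR d.
Proof. by move=> Rd; have := vR_min.2 _ (Rd _ vR_min.1); rewrite (ipDr Hip); lra. Qed.

Let vD_min_dom a b : op_dom A a -> op_dom B b -> ip vD vD <= ip vD (a - b).
Proof. by move=> Aa Bb; apply: vD_min.2; apply: subset_closure; exists a, b. Qed.

Let vR_min_ran a b : op_ran A a -> op_ran B b -> ip vR vR <= ip vR (a + b).
Proof. by move=> Aa Bb; apply: vR_min.2; apply: subset_closure; exists a, b. Qed.

Lemma proj_dom_diff_polar :
  (polar_cone ip (setneg (rec_cone (closure (op_dom A)))) `&`
   polar_cone ip (rec_cone (closure (op_dom B)))) vD.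
Proof.
split=> s Ss.
  by have := vD_rec_ge0 (rec_cone_closure_diffl Ss); rewrite (ipNr Hip); lra.
have Bs : setneg (rec_cone (closure (op_dom B))) (- s) by rewrite /setneg /= opprK.
have := vD_rec_ge0 (rec_cone_closure_diffr (S := op_dom A) Bs).
by rewrite (ipNr Hip); lra.
Qed.

Lemma proj_dom_diff_rec_ran :
  (setneg (rec_cone (closure (op_ran A))) `&` rec_cone (closure (op_ran B))) vD.
Proof.
have [a [u Aau]] := graph_nonempty Hip maxA; have [b [v Bbv]] := graph_nonempty Hip maxB.
split.
  apply: (rec_cone_dom_of_ran_le (c := - ip vD vD - ip vD b)
    (maximally_monotone_inv Hip maxA)) => a' Aa'.
  have := vD_min_dom Aa' (ex_intro _ v Bbv).
  by rewrite (ipNl Hip) (ipDr Hip) (ipNr Hip); lra.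
apply: (rec_cone_dom_of_ran_le (c := ip vD a - ip vD vD)
  (maximally_monotone_inv Hip maxB)) => b' Bb'.
have := vD_min_dom (ex_intro _ u Aau) Bb'.
by rewrite (ipDr Hip) (ipNr Hip); lra.
Qed.

Lemma proj_ran_sum_polar :
  (polar_cone ip (setneg (rec_cone (closure (op_ran A)))) `&`
   polar_cone ip (setneg (rec_cone (closure (op_ran B))))) vR.
Proof.
split=> s Ss.
  by have := vR_rec_ge0 (rec_cone_closure_suml Ss); rewrite (ipNr Hip); lra.
have := vR_rec_ge0 (rec_cone_closure_sumr (S := op_ran A) Ss).
by rewrite (ipNr Hip); lra.
Qed.

Lemma proj_ran_sum_rec_dom :
  (setneg (rec_cone (closure (op_dom A))) `&`
   setneg (rec_cone (closure (op_dom B)))) vR.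
Proof.
have [a [u Aau]] := graph_nonempty Hip maxA; have [b [v Bbv]] := graph_nonempty Hip maxB.
split.
  apply: (rec_cone_dom_of_ran_le (c := ip vR v - ip vR vR) maxA) => u' Au'.
  have := vR_min_ran Au' (ex_intro _ b Bbv).
  by rewrite (ipNl Hip) (ipDr Hip); lra.
apply: (rec_cone_dom_of_ran_le (c := ip vR u - ip vR vR) maxB) => v' Bv'.
have := vR_min_ran (ex_intro _ a Aau) Bv'.
by rewrite (ipNl Hip) (ipDr Hip); lra.
Qed.

Lemma proj_dom_diff_ran_sum_orthogonal : ip vD vR = 0.
Proof.
have [polA polB] := proj_ran_sum_polar; have [recA recB] := proj_dom_diff_rec_ran.
have := polA _ recA; have : setneg (rec_cone (closure (op_ran B))) (- vD).
  by rewrite /setneg /= opprK.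
by move=> /polB; rewrite (ipNr Hip) (ipC Hip vR); lra.
Qed.

Lemma proj_dom_diff_add_ran_sum : (closure D `&` closure Rg) (vD + vR).
Proof.
have recD : rec_cone (closure D) vR.
  exact: rec_cone_closure_diffr proj_ran_sum_rec_dom.2.
have recR : rec_cone (closure Rg) vD.
  exact: rec_cone_closure_sumr proj_dom_diff_rec_ran.2.
by split; [apply: recD vD_min.1 | rewrite addrC; apply: recR vR_min.1].
Qed.

Lemma proj_closure_inter : proj_on (closure D `&` closure Rg) 0 = vD + vR.
Proof.
apply: proj_onE.
- by apply: closedI; exact: closed_closure.
- exact: is_convexI is_convex_closure_dom_diff is_convex_closure_ran_sum.
- exact: proj_dom_diff_add_ran_sum.
move=> s [Ds Rs]; have := vD_min.2 _ Ds; have := vR_min.2 _ Rs.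
have := proj_dom_diff_ran_sum_orthogonal.
by rewrite !(ipE Hip) (ipC Hip vR vD); lra.
Qed.

End Decomposition.

End HilbertSpace.

Theorem proposition3p3 (R : realType) (X : completeNormedModType R)
  (ip : X -> X -> R) (A B : X -> set X) :
  is_inner_product ip ->
  maximally_monotone ip A -> maximally_monotone ip B ->
  let D := mink_diff (op_dom A) (op_dom B) in
  let Rg := mink_sum (op_ran A) (op_ran B) in
  let vD := proj_on (closure D) 0 in
  let vR := proj_on (closure Rg) 0 in
  let rdA := rec_cone (closure (op_dom A)) in
  let rdB := rec_cone (closure (op_dom B)) in
  let rrA := rec_cone (closure (op_ran A)) in
  let rrB := rec_cone (closure (op_ran B)) in
  (* (i) *)
  (polar_cone ip (setneg rdA) `&` polar_cone ip rdB) vD /\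
  polar_cone ip (setneg rdA) `&` polar_cone ip rdB
    = setneg (polar_cone ip rdA) `&` polar_cone ip rdB /\
  (* (ii) *)
  (setneg rrA `&` rrB) vD /\
  (* (iii) *)
  (polar_cone ip (setneg rrA) `&` polar_cone ip (setneg rrB)) vR /\
  polar_cone ip (setneg rrA) `&` polar_cone ip (setneg rrB)
    = setneg (polar_cone ip rrA `&` polar_cone ip rrB) /\
  (* (iv) *)
  (setneg rdA `&` setneg rdB) vR /\
  setneg rdA `&` setneg rdB = setneg (rdA `&` rdB) /\
  (* (v) *)
  ip vD vR = 0 /\
  (* (vi) *)
  (closure D `&` closure Rg) (vD + vR) /\
  (* moreover *)
  (let T := fun x => x - resolvent A x + resolvent B (reflected A x) in
   let ranIT := [set y | exists x, y = x - T x] in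
   let v := proj_on (closure ranIT) 0 in
   closure ranIT = closure (D `&` Rg) ->
   closure (D `&` Rg) = closure D `&` closure Rg ->
   (* (vii) *)
   v = vD + vR /\
   (* (viii) *)
   `|v| ^+ 2 = `|vD| ^+ 2 + `|vR| ^+ 2 /\
   `|vD| ^+ 2 + `|vR| ^+ 2 = pair_norm2 ip (vR, vD)).
Proof.
move=> Hip maxA maxB D Rg vD vR rdA rdB rrA rrB.
have [polA polB] := proj_dom_diff_polar Hip maxA maxB.
have [recA recB] := proj_dom_diff_rec_ran Hip maxA maxB.
have [polRA polRB] := proj_ran_sum_polar Hip maxA maxB.
have [recRA recRB] := proj_ran_sum_rec_dom Hip maxA maxB.
have orth : ip vD vR = 0 := proj_dom_diff_ran_sum_orthogonal Hip maxA maxB.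
split; first by split.
split; first by rewrite (polar_cone_setneg Hip).
split; first by split.
split; first by split.
split; first by rewrite !(polar_cone_setneg Hip) setnegI.
split; first by split.
split; first by rewrite setnegI.
split => //; split; first exact (proj_dom_diff_add_ran_sum Hip maxA maxB).
move=> T ranIT v ranITE DRE.
have vE : v = vD + vR.
  by rewrite /v ranITE DRE; exact (proj_closure_inter Hip maxA maxB).
split => //; split.
  by rewrite vE -!(ipxx Hip) !(ipE Hip) (ipC Hip vR vD) orth; lra.
by rewrite /pair_norm2 /= -!(ipxx Hip) addrC.
Qed.
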